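(* The cycle $C_3\cong K_3$ is not a strict prime $k$th-power distance graph for any integer $k\ge 2$.
   Context: A graph $G$ is a strict prime $k$th-power distance graph if there is an injective map $L:V(G)\to\mathbb{Z}$ such that for every edge $uv$ of $G$, $|L(u)-L(v)|=p^k$ for some prime $p$ (the prime may depend on the edge). *)

From mathcomp Require Import all_boot all_order all_algebra.
Set Implicit Arguments. Unset Strict Implicit. Unset Printing Implicit Defensive.
Import Order.TTheory GRing.Theory Num.Theory.
Local Open Scope ring_scope.

(* A simple graph on a finite vertex type T is given by an adjacency relation
   e (assumed symmetric and irreflexive where relevant). *)
Definition strict_prime_kth_power_distance_graph (T : finType) (e : rel T) (k : nat) : Prop :=
  exists L : T -> int, injective L /\
    forall u v : T, e u v -> exists p : nat, prime p /\ `|L u - L v| = (p ^ k)%:Z.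

Definition complete_graph (n : nat) : rel 'I_n := fun u v => u != v.
Arguments complete_graph n : clear implicits.
Arguments strict_prime_kth_power_distance_graph T e k : clear implicits.

(** Label the triangle by integers a, b, c. Since a - c = (a - b) + (b - c), one
    of the three edge lengths is the sum of the other two, giving primes with
    p^k + q^k = r^k. The largest prime r is odd, so by parity exactly one of p, q
    is 2, say 2^k + q^k = r^k with q, r odd. Then r >= q + 2, whereas
    (q + 2)^k > 2^k + q^k for k >= 2. *)

From mathcomp Require Import all_boot all_order all_algebra zify.
Import Order.TTheory GRing.Theory Num.Theory.

Lemma expnD_gt_add {a b k : nat} :
  0 < a -> 0 < b -> 1 < k -> a ^ k + b ^ k < (a + b) ^ k.
Proof.
move=> a0 b0 /subnKC <-; elim: (k - 2) => [|m IHm]; first nia.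
have am : 0 < a ^ (2 + m) by rewrite expn_gt0 a0.
have bm : 0 < b ^ (2 + m) by rewrite expn_gt0 b0.
rewrite addnS (expnS a) (expnS b) (expnS (a + b)); nia.
Qed.

Lemma odd_addX_odd {a b r k : nat} :
  0 < k -> odd r -> a ^ k + b ^ k = r ^ k -> odd a (+) odd b.
Proof.
by move=> k0 odd_r /(congr1 odd); rewrite oddD !oddX odd_r; case: k k0.
Qed.

Lemma two_expn_add_odd_neq {q r k : nat} :
  odd q -> odd r -> 1 < k -> 2 ^ k + q ^ k != r ^ k.
Proof.
move=> odd_q odd_r k1; apply/eqP=> E.
have q0 : 0 < q by case: q odd_q {E}.
have lt_qr : q < r.
  by rewrite -(ltn_exp2r _ _ (ltnW k1)) -E -[X in X < _]add0n ltn_add2r expn_gt0.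
have le_q2r : q + 2 <= r.
  by have := oddB (ltnW lt_qr); rewrite odd_q odd_r; lia.
have := expnD_gt_add q0 (isT : 0 < 2) k1.
by rewrite [q ^ k + _]addnC E ltn_exp2r ?(ltnW k1); lia.
Qed.

Lemma prime_expn_add_neq {p q r k : nat} :
  prime p -> prime q -> prime r -> 1 < k -> p ^ k + q ^ k != r ^ k.
Proof.
move=> pp pq pr k1; apply/eqP=> E.
have k0 : 0 < k by lia.
have lt_pr : p < r.
  by rewrite -(ltn_exp2r _ _ k0) -E -[X in X < _]addn0 ltn_add2l expn_gt0 prime_gt0.
have odd_r : odd r by case: (even_prime pr) lt_pr (prime_gt1 pp) => [->|//]; lia.
have := odd_addX_odd k0 odd_r E.
have [p2|odd_p] := even_prime pp; have [q2|odd_q] := even_prime pq;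
  rewrite ?p2 ?q2 ?odd_p ?odd_q // => _.
- by move: (two_expn_add_odd_neq odd_q odd_r k1); rewrite -p2 E eqxx.
- by move: (two_expn_add_odd_neq odd_p odd_r k1); rewrite -q2 addnC E eqxx.
Qed.

Local Open Scope ring_scope.

Lemma normD_eq_cases {u v : int} {x y z : nat} :
  `|u| = x%:Z -> `|v| = y%:Z -> `|u + v| = z%:Z ->
  z = (x + y)%N \/ x = (y + z)%N \/ y = (x + z)%N.
Proof. lia. Qed.

Theorem mainTheorem11 (k : nat) : (2 <= k)%N ->
  ~ strict_prime_kth_power_distance_graph _ (complete_graph 3) k.
Proof.
move=> k2 [L [_ edge]].
have [p [pp Ep]] := edge 0 1 isT.
have [q [pq Eq]] := edge 1 2 isT.
have [r [pr Er]] := edge 0 2 isT.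
rewrite -(subrK (L 1) (L 0)) -addrA in Er.
case: (normD_eq_cases Ep Eq Er) => [E|[E|E]].
- by move: (prime_expn_add_neq pp pq pr k2); rewrite E eqxx.
- by move: (prime_expn_add_neq pq pr pp k2); rewrite E eqxx.
- by move: (prime_expn_add_neq pp pr pq k2); rewrite E eqxx.
Qed.
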